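(* Let $\mathfrak l$ be a Lie algebra and let $S_1,S_2$ be subspaces of $\mathfrak l$ with $[S_1,S_2]\subseteq S_1+S_2$. For $i=1,2$ let $\mathfrak s_i$ be the subalgebra of $\mathfrak l$ generated by $S_i$. Then $[\mathfrak s_1,\mathfrak s_2]\subseteq\mathfrak s_1+\mathfrak s_2$; in particular $\mathfrak s_1+\mathfrak s_2$ is a subalgebra of $\mathfrak l$. *)

(* Subspaces are
   (possibly infinite-dimensional) predicates on V. *)
From mathcomp Require Import all_boot all_algebra.
Set Implicit Arguments. Unset Strict Implicit. Unset Printing Implicit Defensive.
Import GRing.Theory.
Local Open Scope ring_scope.

Section Lie.
Variables (K : fieldType) (V : lmodType K).

Definition is_lie_bracket (br : V -> V -> V) : Prop :=
  [/\ (forall a x y z, br (a *: x + y) z = a *: br x z + br y z),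
      (forall a x y z, br z (a *: x + y) = a *: br z x + br z y),
      (forall x, br x x = 0) &
      (forall x y z, br x (br y z) + br y (br z x) + br z (br x y) = 0)].

Definition is_subspace (S : V -> Prop) : Prop :=
  [/\ S 0, (forall x y, S x -> S y -> S (x + y)) &
      (forall (a : K) x, S x -> S (a *: x))].

Definition sub_set (A B : V -> Prop) : Prop := forall x, A x -> B x.

Definition span (A : V -> Prop) : V -> Prop :=
  fun x => forall S, is_subspace S -> sub_set A S -> S x.

Definition sum_sp (S1 S2 : V -> Prop) : V -> Prop :=
  fun x => exists y z, [/\ S1 y, S2 z & x = y + z].

Definition bracket_sp (br : V -> V -> V) (A B : V -> Prop) : V -> Prop :=
  span (fun x => exists a b, [/\ A a, B b & x = br a b]).

Definition is_subalgebra (br : V -> V -> V) (S : V -> Prop) : Prop :=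
  is_subspace S /\ (forall x y, S x -> S y -> S (br x y)).

Definition gen_subalg (br : V -> V -> V) (A : V -> Prop) : V -> Prop :=
  fun x => forall S, is_subalgebra br S -> sub_set A S -> S x.

End Lie.

(* Idea: the normalizer N(M) = {x | [x, M] <= M} of a subspace M is a
   subalgebra, by the Jacobi identity.  If s is a subalgebra containing S and
   [S, T] <= s + T, then S <= N(s + T), hence the subalgebra generated by S is
   contained in N(s + T) as well.  Applied once with (S, T) = (S1, S2) and once,
   after antisymmetry, with (S, T) = (S2, s1), this gives [s1, s2] <= s1 + s2.  Then s1 and s2 both lie in
   N(s1 + s2), so s1 + s2 is a subalgebra. *)
From Pilot Require Import Defs.
From mathcomp Require Import all_boot all_algebra.
Set Implicit Arguments. Unset Strict Implicit. Unset Printing Implicit Defensive.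
Import GRing.Theory.
Local Open Scope ring_scope.

Section Subspaces.
Variables (K : fieldType) (V : lmodType K).
Implicit Types (A B M : V -> Prop).

Lemma subspace0 M : is_subspace M -> M 0.
Proof. by case. Qed.

Lemma subspaceD M x y : is_subspace M -> M x -> M y -> M (x + y).
Proof. by case=> _ hD _; apply: hD. Qed.

Lemma subspaceZ M a x : is_subspace M -> M x -> M (a *: x).
Proof. by case=> _ _ hZ; apply: hZ. Qed.

Lemma subspaceN M x : is_subspace M -> M x -> M (- x).
Proof. by move=> hM hx; rewrite -scaleN1r; apply: subspaceZ. Qed.

Lemma sum_sp_subspace A B :
  is_subspace A -> is_subspace B -> is_subspace (sum_sp A B).
Proof.
move=> hA hB; split.
- by exists 0, 0; rewrite addr0; split=> //; apply: subspace0.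
- move=> _ _ [a [b [ha hb ->]]] [c [d [hc hd ->]]].
  by exists (a + c), (b + d); rewrite addrACA; split=> //; apply: subspaceD.
- move=> k _ [a [b [ha hb ->]]]; exists (k *: a), (k *: b).
  by rewrite scalerDr; split=> //; apply: subspaceZ.
Qed.

Lemma sum_sp_inl A B x : is_subspace B -> A x -> sum_sp A B x.
Proof. by move=> hB hx; exists x, 0; rewrite addr0; split=> //; apply: subspace0. Qed.

Lemma sum_sp_inr A B x : is_subspace A -> B x -> sum_sp A B x.
Proof. by move=> hA hx; exists 0, x; rewrite add0r; split=> //; apply: subspace0. Qed.

Lemma sum_spC A B : sub_set (sum_sp A B) (sum_sp B A).
Proof. by move=> _ [a [b [ha hb ->]]]; exists b, a; rewrite addrC. Qed.

Lemma sum_spS A A' B B' :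
  sub_set A A' -> sub_set B B' -> sub_set (sum_sp A B) (sum_sp A' B').
Proof.
by move=> sA sB _ [a [b [ha hb ->]]]; exists a, b; split; [apply: sA|apply: sB|].
Qed.

Lemma span_min A M : is_subspace M -> sub_set A M -> sub_set (Defs.span A) M.
Proof. by move=> hM sAM x hx; apply: hx. Qed.

Lemma span_incl A : sub_set A (Defs.span A).
Proof. by move=> x hx M _ sAM; apply: sAM. Qed.

End Subspaces.

Section LieAlgebra.
Variables (K : fieldType) (V : lmodType K) (br : V -> V -> V).
Hypothesis hlie : is_lie_bracket br.
Implicit Types (A B M S T s : V -> Prop).

Lemma lie_brDl x y z : br (x + y) z = br x z + br y z.
Proof. by case: hlie => hl _ _ _; rewrite -[x]scale1r hl !scale1r. Qed.

Lemma lie_brDr x y z : br z (x + y) = br z x + br z y.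
Proof. by case: hlie => _ hr _ _; rewrite -[x]scale1r hr !scale1r. Qed.

Lemma lie_br0l z : br 0 z = 0.
Proof. by apply: (addrI (br 0 z)); rewrite -lie_brDl !addr0. Qed.

Lemma lie_brZl a x z : br (a *: x) z = a *: br x z.
Proof. by case: hlie => hl _ _ _; rewrite -[a *: x]addr0 hl lie_br0l addr0. Qed.

Lemma lie_br_anti x y : br x y = - br y x.
Proof.
case: hlie => _ _ halt _; apply/eqP; rewrite -addr_eq0.
by have := halt (x + y); rewrite lie_brDl !lie_brDr !halt add0r addr0 => ->.
Qed.

Lemma lie_jacobi x y z : br (br x y) z = br x (br y z) + br y (br z x).
Proof.
case: hlie => _ _ _ hjac; apply/eqP; rewrite lie_br_anti eq_sym -subr_eq0 opprK.
by rewrite hjac.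
Qed.

Lemma mem_bracket_sp A B a b : A a -> B b -> bracket_sp br A B (br a b).
Proof. by move=> ha hb; apply: span_incl; exists a, b. Qed.

Lemma gen_subalg_incl A : sub_set A (gen_subalg br A).
Proof. by move=> x hx M _ sAM; apply: sAM. Qed.

Lemma gen_subalg_min A M :
  is_subalgebra br M -> sub_set A M -> sub_set (gen_subalg br A) M.
Proof. by move=> hM sAM x hx; apply: hx. Qed.

Lemma gen_subalg_subalgebra A : is_subalgebra br (gen_subalg br A).
Proof.
split; first split.
- by move=> M [hM _] _; apply: subspace0.
- move=> x y hx hy M hMsa sAM; have [hM _] := hMsa.
  exact: subspaceD (hx _ hMsa sAM) (hy _ hMsa sAM).
- move=> a x hx M hMsa sAM; have [hM _] := hMsa.
  exact: subspaceZ (hx _ hMsa sAM).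
- move=> x y hx hy M hMsa sAM; have [_ hbr] := hMsa.
  exact: hbr (hx _ hMsa sAM) (hy _ hMsa sAM).
Qed.

Definition normalizer M : V -> Prop := fun x => forall u, M u -> M (br x u).

Lemma normalizer_subalgebra M : is_subspace M -> is_subalgebra br (normalizer M).
Proof.
move=> hM; split; first split.
- by move=> u _; rewrite lie_br0l; apply: subspace0.
- by move=> x y hx hy u hu; rewrite lie_brDl; apply: subspaceD (hx _ _) (hy _ _).
- by move=> a x hx u hu; rewrite lie_brZl; apply: subspaceZ (hx _ _).
- move=> x y hx hy u hu; rewrite lie_jacobi.
  apply: (subspaceD hM (hx _ (hy _ hu)) (hy _ _)).
  by rewrite lie_br_anti; apply: subspaceN hM (hx _ hu).
Qed.

Lemma subalgebra_normalizer M :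
  is_subspace M -> sub_set M (normalizer M) -> is_subalgebra br M.
Proof. by move=> hM sMN; split=> // x y hx; apply: sMN. Qed.

Lemma gen_subalg_normalizer_sum s S T :
  is_subalgebra br s -> is_subspace T -> sub_set S s ->
  (forall x z, S x -> T z -> sum_sp s T (br x z)) ->
  sub_set (gen_subalg br S) (normalizer (sum_sp s T)).
Proof.
move=> [hs hbr] hT sSs hST; apply: gen_subalg_min.
  by apply/normalizer_subalgebra/sum_sp_subspace.
move=> x hx _ [a [b [ha hb ->]]]; rewrite lie_brDr.
apply: subspaceD; first exact: sum_sp_subspace.
  by apply: sum_sp_inl => //; apply: hbr => //; apply: sSs.
exact: hST.
Qed.

Lemma gen_subalg_bracket_sum s S T x z :
  is_subalgebra br s -> is_subspace T -> sub_set S s ->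
  (forall x z, S x -> T z -> sum_sp s T (br x z)) ->
  gen_subalg br S x -> T z -> sum_sp s T (br x z).
Proof.
move=> hs hT sSs hST hx hz; apply: gen_subalg_normalizer_sum hx _ _ => //.
by apply: sum_sp_inr => //; case: hs.
Qed.

Lemma sum_subalgebra A B :
  is_subalgebra br A -> is_subalgebra br B ->
  (forall x z, A x -> B z -> sum_sp A B (br x z)) ->
  is_subalgebra br (sum_sp A B).
Proof.
move=> [hA hbrA] [hB hbrB] hAB; have hAB_sp := sum_sp_subspace hA hB.
apply: subalgebra_normalizer => // _ [a [b [ha hb ->]]] _ [c [d [hc hd ->]]].
rewrite lie_brDl !lie_brDr.
apply: (subspaceD hAB_sp); apply: (subspaceD hAB_sp).
- exact: sum_sp_inl hB (hbrA _ _ ha hc).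
- exact: hAB.
- by rewrite lie_br_anti; apply: (subspaceN hAB_sp); apply: hAB.
- exact: sum_sp_inr hA (hbrB _ _ hb hd).
Qed.

End LieAlgebra.

Theorem lemma1p4 (K : fieldType) (V : lmodType K) (br : V -> V -> V)
  (hlie : is_lie_bracket br) (S1 S2 : V -> Prop)
  (hS1 : is_subspace S1) (hS2 : is_subspace S2)
  (hS12 : sub_set (bracket_sp br S1 S2) (sum_sp S1 S2)) :
  sub_set (bracket_sp br (gen_subalg br S1) (gen_subalg br S2))
         (sum_sp (gen_subalg br S1) (gen_subalg br S2))
  /\ is_subalgebra br (sum_sp (gen_subalg br S1) (gen_subalg br S2)).
Proof.
set s1 := gen_subalg br S1; set s2 := gen_subalg br S2.
have sa1 : is_subalgebra br s1 by apply: gen_subalg_subalgebra.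
have sa2 : is_subalgebra br s2 by apply: gen_subalg_subalgebra.
have [[hs1 _] [hs2 _]] := (sa1, sa2).
have hs12 : is_subspace (sum_sp s1 s2) by apply: sum_sp_subspace.
have br_s1_S2 x z : s1 x -> S2 z -> sum_sp s1 S2 (br x z).
  apply: (gen_subalg_bracket_sum hlie sa1 hS2 (@gen_subalg_incl _ _ br S1)).
  move=> {}x {}z hx hz; apply: (sum_spS (@gen_subalg_incl _ _ br S1) (fun _ h => h)).
  by apply: hS12; apply: mem_bracket_sp.
have br_s2_s1 z x : s2 z -> s1 x -> sum_sp s2 s1 (br z x).
  apply: (gen_subalg_bracket_sum hlie sa2 hs1 (@gen_subalg_incl _ _ br S2)).
  move=> {}z {}x hz hx; apply: sum_spC; rewrite (lie_br_anti hlie).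
  apply: (subspaceN (sum_sp_subspace hs1 hs2)).
  exact: sum_spS (fun _ h => h) (@gen_subalg_incl _ _ br S2) _ (br_s1_S2 _ _ hx hz).
have br_s1_s2 x z : s1 x -> s2 z -> sum_sp s1 s2 (br x z).
  move=> hx hz; rewrite (lie_br_anti hlie); apply: (subspaceN hs12).
  exact: sum_spC (br_s2_s1 _ _ hz hx).
split; first by apply: span_min => // _ [a [b [ha hb ->]]]; apply: br_s1_s2.
exact: sum_subalgebra.
Qed.
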